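(* Let $L=\langle S,A,\to\rangle$ be a labelled transition system. For every $x,y\in\{o,b\}$ and $\bar s,\bar t\in S$, we have $\bar s\mathrel{\underline{\leftrightarrow}}_{(x,y)}\bar t$ if and only if $\bar s\,R\,\bar t$ for some symmetric relation $R\subseteq S\times S$ such that whenever $s\,R\,t$ and $s\xrightarrow{a}s'$, either $a=\tau$ and $s'\,R\,t$, or there exist states $t',t_1,t_2$ with $t\Longrightarrow_{x,R,s}t_1\xrightarrow{a}t_2\Longrightarrow_{y,R,s'}t'$ and $s'\,R\,t'$.
   Context: An LTS is $\langle S,A,\to\rangle$ with states $S$, actions $A$ containing the internal action $\tau$, and $\to\subseteq S\times A\times S$; write $s\xrightarrow{a}t$, and $\twoheadrightarrow$ for the reflexive-transitive closure of $\xrightarrow{\tau}$. For $R\subseteq S\times S$ and $s,s',t$: $s\twoheadrightarrow_{o,R,t}s'$ iff $s\twoheadrightarrow s'$; $s\twoheadrightarrow_{b,R,t}s'$ iff $s\twoheadrightarrow s'$, $t\,R\,s$ and $t\,R\,s'$. Further, $s\Longrightarrow_{o,R,t}s'$ iff $s\twoheadrightarrow s'$, and $s\Longrightarrow_{b,R,t}s'$ iff there is a finite sequence $s=s_0\xrightarrow{\tau}s_1\xrightarrow{\tau}\cdots\xrightarrow{\tau}s_n=s'$ with $t\,R\,s_i$ for all $i$. For $x,y\in\{o,b\}$, a symmetric $R$ is an $(x,y)$-generic bisimulation if whenever $s\,R\,t$ and $s\xrightarrow{a}s'$, either $a=\tau$ and $s'\,R\,t$, or there exist $t',t_1,t_2$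 with $t\twoheadrightarrow_{x,R,s}t_1\xrightarrow{a}t_2\twoheadrightarrow_{y,R,s'}t'$ and $s'\,R\,t'$. $s\mathrel{\underline{\leftrightarrow}}_{(x,y)}t$ iff some $(x,y)$-generic bisimulation relates $s$ and $t$. *)

From Stdlib Require Import Relations.

Set Implicit Arguments.

Record LTS := {
  St : Type;
  Act : Type;
  tau : Act;
  step : St -> Act -> St -> Prop
}.

Inductive mode := o | b.

Section Defs.
Variable L : LTS.
Notation S := (St L).

Definition tau_step (s s' : S) : Prop := step L s (tau L) s'.

Definition taus : S -> S -> Prop := clos_refl_trans_1n S tau_step.

(* s ->>_{x,R,t} s' *)
Definition taus_m (x : mode) (R : S -> S -> Prop) (t s s' : S) : Prop :=
  match x with
  | o => taus s s'
  | b => taus s s' /\ R t s /\ R t s'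
  end.

Inductive taupath_R (R : S -> S -> Prop) (t : S) : S -> S -> Prop :=
  | tp_refl : forall s, R t s -> taupath_R R t s s
  | tp_step : forall s s1 s', R t s -> tau_step s s1 -> taupath_R R t s1 s' ->
      taupath_R R t s s'.

(* s ==>_{x,R,t} s' *)
Definition wtaus_m (x : mode) (R : S -> S -> Prop) (t s s' : S) : Prop :=
  match x with
  | o => taus s s'
  | b => taupath_R R t s s'
  end.

Definition symmetric_rel (R : S -> S -> Prop) : Prop :=
  forall s t, R s t -> R t s.

Definition generic_bisim (x y : mode) (R : S -> S -> Prop) : Prop :=
  symmetric_rel R /\
  forall s t a s', R s t -> step L s a s' ->
    (a = tau L /\ R s' t) \/
    (exists t' t1 t2, taus_m x R s t t1 /\ step L t1 a t2 /\
                      taus_m y R s' t2 t' /\ R s' t').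

Definition gen_bisimilar (x y : mode) (s t : S) : Prop :=
  exists R, generic_bisim x y R /\ R s t.

End Defs.

(** For [x = o] the two transfer conditions differ only in the tail after the
    [a]-step, and a [->>_b] tail whose endpoints are both related to [s'] can be
    replaced by the empty [==>_b] tail.  For [x = b] one passes to the largest
    semi-branching bisimulation, which contains every [(b,y)]-generic
    bisimulation and is closed under stuttering: relating [s] to every state
    lying on a τ-path between two states related to [s] again gives a
    semi-branching bisimulation, thanks to its weak τ-clause.  So for this
    relation a [->>_b] prefix, which only constrains its endpoints, is a
    [==>_b] prefix; and a τ-step answered by a nonempty τ-path
    [t ->> c -τ-> w] becomes a match with [t1 = c] and [t2 = t' = w]. *)

From Stdlib Require Import Relations.

#[local] Arguments tau_step {L} s s'.
#[local] Arguments taus {L} _ _.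
#[local] Arguments taus_m {L} x R t s s'.
#[local] Arguments taupath_R {L} R t _ _.
#[local] Arguments wtaus_m {L} x R t s s'.
#[local] Arguments symmetric_rel {L} R.
#[local] Arguments generic_bisim {L} x y R.

Section Bisimulations.
Context {L : LTS}.
Notation S := (St L).

Lemma taus_refl (s : S) : taus s s.
Proof. apply rt1n_refl. Qed.

Lemma taus_trans (s u v : S) : taus s u -> taus u v -> taus s v.
Proof.
  intros Hsu Huv. apply clos_rt_rt1n.
  eapply rt_trans; apply clos_rt1n_rt; eassumption.
Qed.

Lemma taus_last (s v : S) :
  taus s v -> s = v \/ exists u, taus s u /\ tau_step u v.
Proof.
  intros Hsv. apply clos_rt1n_rt, clos_rt_rtn1 in Hsv.
  destruct Hsv as [|u v Huv Hsu]; [now left|].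
  right. exists u. split; [|exact Huv].
  apply clos_rt_rt1n, clos_rtn1_rt, Hsu.
Qed.

Lemma taus_m_taus x (R : S -> S -> Prop) (t s s' : S) :
  taus_m x R t s s' -> taus s s'.
Proof. destruct x; simpl; tauto. Qed.

Lemma taus_m_mono x (R R' : S -> S -> Prop) (t s s' : S) :
  (forall p q, R p q -> R' p q) -> taus_m x R t s s' -> taus_m x R' t s s'.
Proof. intros HR. destruct x; simpl; intuition. Qed.

Lemma taupath_R_taus (R : S -> S -> Prop) (t s s' : S) :
  taupath_R R t s s' -> taus s s' /\ R t s /\ R t s'.
Proof.
  induction 1 as [s Hs | s s1 s' Hs Hss1 _ [Hs1s' [_ Hs']]].
  - repeat split; auto using taus_refl.
  - repeat split; auto. econstructor; eassumption.
Qed.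

Lemma wtaus_m_taus_m x (R : S -> S -> Prop) (t s s' : S) :
  wtaus_m x R t s s' -> taus_m x R t s s'.
Proof. destruct x; simpl; [auto | apply taupath_R_taus]. Qed.

Lemma wtaus_m_refl x (R : S -> S -> Prop) (t s : S) :
  R t s -> wtaus_m x R t s s.
Proof. destruct x; simpl; [intros _; apply taus_refl | apply tp_refl]. Qed.

Lemma taupath_R_of_taus (R : S -> S -> Prop) (t s s' : S) :
  taus s s' -> (forall u, taus s u -> taus u s' -> R t u) -> taupath_R R t s s'.
Proof.
  induction 1 as [s | s s1 s' Hss1 Hs1s' IH]; intros Hon.
  - apply tp_refl, Hon; apply taus_refl.
  - apply tp_step with s1; [| exact Hss1 |].
    + apply Hon; [apply taus_refl | econstructor; eassumption].
    + apply IH. intros u Hs1u Hus'. apply Hon; [econstructor |]; eassumption.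
Qed.

Lemma taus_m_related_tail y (R : S -> S -> Prop) (s' t2 t' : S) :
  taus_m y R s' t2 t' -> R s' t' -> exists t'', wtaus_m y R s' t2 t'' /\ R s' t''.
Proof.
  destruct y; simpl.
  - intros Ht2t' Hs't'. now exists t'.
  - intros [_ [Hs't2 _]] _. exists t2. split; [apply tp_refl |]; exact Hs't2.
Qed.

Definition semibranching_bisim (y : mode) (R : S -> S -> Prop) : Prop :=
  symmetric_rel R /\
  forall s t a s', R s t -> step L s a s' ->
    (a = tau L /\ exists t', taus t t' /\ R s t' /\ R s' t') \/
    (exists t' t1 t2, taus t t1 /\ R s t1 /\ step L t1 a t2 /\
                      taus_m y R s' t2 t' /\ R s' t').

Definition semibranching_bisimilar (y : mode) (s t : S) : Prop :=
  exists R, semibranching_bisim y R /\ R s t.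

Lemma generic_bisim_semibranching y (R : S -> S -> Prop) :
  generic_bisim b y R -> semibranching_bisim y R.
Proof.
  intros [Hsym Htr]. split; [exact Hsym |].
  intros s t a s' Hst Hss'.
  destruct (Htr s t a s' Hst Hss')
    as [[Ha Hs't] | (t' & t1 & t2 & [Htt1 [_ Hst1]] & Ht1t2 & Ht2t' & Hs't')].
  - left. split; [exact Ha |]. exists t. repeat split; auto using taus_refl.
  - right. exists t', t1, t2. auto.
Qed.

Lemma semibranching_bisimilar_bisim y : semibranching_bisim y (semibranching_bisimilar y).
Proof.
  split.
  - intros s t (R & [Hsym Htr] & Hst). exists R. split; [split |]; auto.
  - intros s t a s' (R & [Hsym Htr] & Hst) Hss'.
    assert (HR : forall p q, R p q -> semibranching_bisimilar y p q)
      by (intros p q Hpq; exists R; split; [split |]; auto).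
    destruct (Htr s t a s' Hst Hss')
      as [[Ha (t' & Htt' & Hst' & Hs't')] | (t' & t1 & t2 & Htt1 & Hst1 & Ht1t2 & Ht2t' & Hs't')].
    + left. split; [exact Ha |]. exists t'. auto.
    + right. exists t', t1, t2. repeat split; auto.
      eapply taus_m_mono; eassumption.
Qed.

Lemma semibranching_bisim_taus y (R : S -> S -> Prop) (s s' t : S) :
  semibranching_bisim y R -> R s t -> taus s s' -> exists t', taus t t' /\ R s' t'.
Proof.
  intros [_ Htr] Hst Hss'. revert t Hst.
  induction Hss' as [s | s s1 s' Hss1 _ IH]; intros t Hst.
  - exists t. auto using taus_refl.
  - destruct (Htr s t (tau L) s1 Hst Hss1)
      as [[_ (u & Htu & _ & Hs1u)] | (u & t1 & t2 & Htt1 & _ & Ht1t2 & Ht2u & Hs1u)];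
      destruct (IH u Hs1u) as (t' & Hut' & Hs't');
      exists t'; split; auto.
    + eapply taus_trans; eassumption.
    + eapply taus_trans; [exact Htt1 |]. econstructor; [exact Ht1t2 |].
      eapply taus_trans; [eapply taus_m_taus |]; eassumption.
Qed.

Lemma semibranching_bisim_up_to_taus y (R R' : S -> S -> Prop) :
  semibranching_bisim y R -> symmetric_rel R' -> (forall p q, R p q -> R' p q) ->
  (forall p q, R' p q -> exists r, taus q r /\ R p r) ->
  semibranching_bisim y R'.
Proof.
  intros [_ Htr] Hsym HRR' Hreach. split; [exact Hsym |].
  intros p q a p' Hpq Hpp'.
  destruct (Hreach p q Hpq) as (r & Hqr & Hpr).
  destruct (Htr p r a p' Hpr Hpp')
    as [[Ha (w & Hrw & Hpw & Hp'w)] | (w & r1 & r2 & Hrr1 & Hpr1 & Hr1r2 & Hr2w & Hp'w)].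
  - left. split; [exact Ha |]. exists w. split; [eapply taus_trans |]; eauto.
  - right. exists w, r1, r2. repeat split; auto.
    + eapply taus_trans; eassumption.
    + eapply taus_m_mono; eassumption.
Qed.

Definition between_bisimilar (y : mode) (p q : S) : Prop :=
  exists t t1, taus t q /\ taus q t1 /\
    semibranching_bisimilar y p t /\ semibranching_bisimilar y p t1.

Lemma semibranching_bisimilar_stutter y (s t u t1 : S) :
  semibranching_bisimilar y s t -> semibranching_bisimilar y s t1 ->
  taus t u -> taus u t1 -> semibranching_bisimilar y s u.
Proof.
  intros Hst Hst1 Htu Hut1.
  pose proof (semibranching_bisimilar_bisim y) as Hbisim.
  exists (fun p q => between_bisimilar y p q \/ between_bisimilar y q p).
  split; [| left; exists t, t1; auto].
  apply semibranching_bisim_up_to_taus with (semibranching_bisimilar y); [exact Hbisim | | |].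
  - intros p q [Hpq | Hqp]; auto.
  - intros p q Hpq. left. exists q, q. auto using taus_refl.
  - intros p q [(v & v1 & Hvq & Hqv1 & _ & Hpv1) | (v & v1 & Hvp & _ & Hqv & _)].
    + exists v1. auto.
    + apply (semibranching_bisim_taus y _ v p q Hbisim); [| exact Hvp].
      apply (proj1 Hbisim), Hqv.
Qed.

Lemma semibranching_bisimilar_taupath y (s t u t1 : S) :
  semibranching_bisimilar y s t -> semibranching_bisimilar y s t1 ->
  taus t u -> taus u t1 -> taupath_R (semibranching_bisimilar y) s t u.
Proof.
  intros Hst Hst1 Htu Hut1. apply taupath_R_of_taus; [exact Htu |].
  intros v Htv Hvu. apply semibranching_bisimilar_stutter with t t1; auto.
  eapply taus_trans; eassumption.
Qed.

Definition pathwise_generic_bisim (x y : mode) (R : S -> S -> Prop) : Prop :=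
  symmetric_rel R /\
  forall s t a s', R s t -> step L s a s' ->
    (a = tau L /\ R s' t) \/
    (exists t' t1 t2, wtaus_m x R s t t1 /\ step L t1 a t2 /\
                      wtaus_m y R s' t2 t' /\ R s' t').

Lemma pathwise_generic_bisim_generic_bisim x y (R : S -> S -> Prop) :
  pathwise_generic_bisim x y R -> generic_bisim x y R.
Proof.
  intros [Hsym Htr]. split; [exact Hsym |].
  intros s t a s' Hst Hss'.
  destruct (Htr s t a s' Hst Hss') as [Htau | (t' & t1 & t2 & Htt1 & Ht1t2 & Ht2t' & Hs't')];
    [now left |].
  right. exists t', t1, t2. auto using wtaus_m_taus_m.
Qed.

Lemma generic_bisim_pathwise_o y (R : S -> S -> Prop) :
  generic_bisim o y R -> pathwise_generic_bisim o y R.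
Proof.
  intros [Hsym Htr]. split; [exact Hsym |].
  intros s t a s' Hst Hss'.
  destruct (Htr s t a s' Hst Hss') as [Htau | (t' & t1 & t2 & Htt1 & Ht1t2 & Ht2t' & Hs't')];
    [now left |].
  destruct (taus_m_related_tail y R s' t2 t' Ht2t' Hs't') as (t'' & Ht2t'' & Hs't'').
  right. exists t'', t1, t2. auto.
Qed.

Lemma semibranching_bisimilar_pathwise y :
  pathwise_generic_bisim b y (semibranching_bisimilar y).
Proof.
  pose proof (semibranching_bisimilar_bisim y) as [Hsym Htr].
  split; [exact Hsym |].
  intros s t a s' Hst Hss'.
  destruct (Htr s t a s' Hst Hss')
    as [[Ha (w & Htw & Hsw & Hs'w)] | (t' & t1 & t2 & Htt1 & Hst1 & Ht1t2 & Ht2t' & Hs't')].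
  - destruct (taus_last t w Htw) as [<- | (c & Htc & Hcw)]; [now left |].
    subst a. right. exists w, c, w.
    repeat split; [| exact Hcw | apply wtaus_m_refl; exact Hs'w | exact Hs'w].
    apply semibranching_bisimilar_taupath with (t1 := w); auto.
    apply clos_rt1n_step, Hcw.
  - destruct (taus_m_related_tail y _ s' t2 t' Ht2t' Hs't') as (t'' & Ht2t'' & Hs't'').
    right. exists t'', t1, t2. repeat split; auto.
    apply semibranching_bisimilar_taupath with (t1 := t1); auto using taus_refl.
Qed.

End Bisimulations.

Theorem theorem4p9 (L : LTS) (x y : mode) (sb tb : St L) :
  @gen_bisimilar L x y sb tb <->
  exists R : St L -> St L -> Prop,
    R sb tb /\
    @symmetric_rel L R /\
    (forall s t a s', R s t -> step L s a s' ->
       (a = tau L /\ R s' t) \/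
       (exists t' t1 t2, @wtaus_m L x R s t t1 /\ step L t1 a t2 /\
                         @wtaus_m L y R s' t2 t' /\ R s' t')).
Proof.
  split.
  - intros (R & HR & Hsbtb). destruct x.
    + exists R. split; [exact Hsbtb | apply generic_bisim_pathwise_o, HR].
    + exists (semibranching_bisimilar y). split; [| apply semibranching_bisimilar_pathwise].
      exists R. split; [apply generic_bisim_semibranching, HR | exact Hsbtb].
  - intros (R & Hsbtb & HR). exists R.
    split; [apply pathwise_generic_bisim_generic_bisim, HR | exact Hsbtb].
Qed.
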